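(* Let $S$ be a numerical semigroup. The following conditions are equivalent. (1) $S$ is a MANS-semigroup with $\mathrm{e}(S)=3$. (2) $S=\langle m,\ am+1,\ bm+t\rangle$, where $m,a,b,t\in\mathbb{N}$, $m\geq 3$, $a\geq 1$, $t\in\{2,\ldots,m-1\}$, and $(t-1)(am+1)<bm+t<t(am+1)$.
   Context: $\mathbb{N}=\{0,1,2,\ldots\}$. A numerical semigroup is a subset $S\subseteq\mathbb{N}$ closed under addition, containing $0$, with $\mathbb{N}\setminus S$ finite. For $A\subseteq\mathbb{N}$ nonempty, $\langle A\rangle$ is the submonoid of $(\mathbb{N},+)$ generated by $A$. Every numerical semigroup $S$ has a unique minimal system of generators $\mathrm{msg}(S)$ (finite), and $\mathrm{e}(S)=|\mathrm{msg}(S)|$ is its embedding dimension. The multiplicity $\mathrm{m}(S)$ is the least element of $S\setminus\{0\}$. For $n\in S\setminus\{0\}$, the Apéry set is $\mathrm{Ap}(S,n)=\{s\in S: s-n\notin S\}=\{w(0)=0,w(1),\ldots,w(n-1)\}$, where $w(i)$ is the least element of $S$ congruent to $i$ modulo $n$. $S$ is a MANS-semigroup (numerical semigroup with monotone Apéry set) if $w(1)<w(2)<\cdots<w(\mathrm{m}(S)-1)$, where $w(i)$ is the least element of $S$ congruent to $i$ modulo $\mathrm{m}(S)$. *)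

From mathcomp Require Import all_boot.
Set Implicit Arguments. Unset Strict Implicit. Unset Printing Implicit Defensive.

Definition numerical_semigroup (S : pred nat) : Prop :=
  [/\ 0 \in S,
      (forall x y, x \in S -> y \in S -> x + y \in S)
    & exists N, forall n, N <= n -> n \in S].

Inductive in_gen (A : seq nat) : nat -> Prop :=
  | in_gen0 : in_gen A 0
  | in_genS a x : a \in A -> in_gen A x -> in_gen A (a + x).

Definition generates (S : pred nat) (A : seq nat) : Prop :=
  forall x, x \in S <-> in_gen A x.

Definition is_msg (S : pred nat) (A : seq nat) : Prop :=
  [/\ uniq A, generates S A
    & forall B : seq nat, {subset B <= A} -> generates S B -> {subset A <= B}].

Definition embedding_dimension_is (S : pred nat) (e : nat) : Prop :=
  exists A, is_msg S A /\ size A = e.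

Definition is_multiplicity (S : pred nat) (m : nat) : Prop :=
  [/\ 0 < m, m \in S & forall s, s \in S -> 0 < s -> m <= s].

Definition is_apery_elt (S : pred nat) (n i w : nat) : Prop :=
  [/\ w \in S, w = i %[mod n]
    & forall s, s \in S -> s = i %[mod n] -> w <= s].

Definition MANS (S : pred nat) : Prop :=
  exists m, is_multiplicity S m /\
    forall i j wi wj, 1 <= i -> i < j -> j <= m - 1 ->
      is_apery_elt S m i wi -> is_apery_elt S m j wj -> wi < wj.

From mathcomp Require Import all_boot zify.

(* The minimal generators of a numerical semigroup are its indecomposable
   elements, and each of them other than the multiplicity [m] is the Apery
   element of its own residue class mod [m].  If [S] is a MANS-semigroup with
   generators [m, n1, n2], the decomposition of [w(1)] forces a generator [n1]
   of residue 1; writing [t] for the residue of [n2 = w(t)], the element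
   [w(t-1) < w(t)] avoids [n2], so it is at least [(t-1) n1], while [t n1] is
   congruent to [n2], hence larger, and different from it since [n2] is
   indecomposable.  Conversely, under these bounds the Apery element of residue
   [q t + r] (with [r < t]) is [q n2 + r n1], which increases with the residue. *)

Set Implicit Arguments.
Unset Strict Implicit.
Unset Printing Implicit Defensive.

Section Generation.

Implicit Types (A B : seq nat) (a k x y : nat).

Lemma in_gen_mem A a : a \in A -> in_gen A a.
Proof. by move=> aA; rewrite -[a]addn0; apply: in_genS aA (in_gen0 _). Qed.

Lemma in_gen_add A x y : in_gen A x -> in_gen A y -> in_gen A (x + y).
Proof. by elim=> [|a x' aA _ IH] Ay //; rewrite -addnA; apply: in_genS aA (IH Ay). Qed.

Lemma in_gen_mul A a k : a \in A -> in_gen A (k * a).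
Proof.
by move=> aA; elim: k => [|k IH]; [apply: in_gen0 | rewrite mulSn; apply: in_genS aA IH].
Qed.

Lemma in_gen_trans A B x : (forall a, a \in A -> in_gen B a) -> in_gen A x -> in_gen B x.
Proof. by move=> AB; elim=> [|a x' aA _]; [apply: in_gen0 | apply/in_gen_add/AB]. Qed.

Lemma in_gen_sub A B x : {subset A <= B} -> in_gen A x -> in_gen B x.
Proof. by move=> sAB; apply: in_gen_trans => a /sAB /in_gen_mem. Qed.

Lemma in_gen_gt0 A x :
  in_gen A x -> 0 < x -> exists a y, [/\ a \in A, in_gen A y & x = a + y].
Proof. by case=> // a y aA Ay _; exists a, y. Qed.

Lemma in_gen_nil x : in_gen [::] x <-> x = 0.
Proof. by split=> [[] // a y|->]; rewrite ?in_nil //; apply: in_gen0. Qed.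

Lemma in_gen_consP a A x :
  in_gen (a :: A) x <-> exists k y, in_gen A y /\ x = k * a + y.
Proof.
split=> [|[k [y [Ay ->]]]].
- elim=> [|b x' + _ [k [y [Ay ->]]]]; first by exists 0, 0; split; first apply: in_gen0.
  rewrite inE => /predU1P[->|bA]; first by exists k.+1, y; rewrite mulSn addnA.
  by exists k, (b + y); rewrite addnCA; split; first apply: in_genS bA Ay.
- apply: in_gen_add; first by apply: in_gen_mul; rewrite mem_head.
  by apply: in_gen_sub Ay => b bA; rewrite inE bA orbT.
Qed.

Lemma in_gen2P p q x : in_gen [:: p; q] x <-> exists k l, x = k * p + l * q.
Proof.
rewrite in_gen_consP; split=> [[k [y [/in_gen_consP[l [y' [/in_gen_nil-> ->]]] ->]]]|].
  by exists k, l; rewrite addn0.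
case=> k [l ->]; exists k, (l * q); split=> //.
by apply/in_gen_consP; exists l, 0; rewrite addn0; split=> //; apply/in_gen_nil.
Qed.

Lemma in_gen3P p q r x :
  in_gen [:: p; q; r] x <-> exists z u v, x = z * p + u * q + v * r.
Proof.
rewrite in_gen_consP; split=> [[z [y [/in_gen2P[u [v ->]] ->]]]|[z [u [v ->]]]].
  by exists z, u, v; rewrite addnA.
by exists z, (u * q + v * r); rewrite addnA; split=> //; apply/in_gen2P; exists u, v.
Qed.

Lemma in_gen_filter_lt A c x : in_gen A x -> x < c -> in_gen [seq y <- A | y != c] x.
Proof.
elim=> [|a y aA _ IH] lt_c; first exact: in_gen0.
apply: in_genS; last by apply: IH; apply: leq_ltn_trans lt_c; rewrite leq_addl.
by rewrite mem_filter aA andbT; apply: contraTneq lt_c => ->; rewrite -leqNgt leq_addr.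
Qed.

Lemma generates_add S A x y : generates S A -> x \in S -> y \in S -> x + y \in S.
Proof. by move=> genA /genA Ax /genA Ay; apply/genA/in_gen_add. Qed.

Lemma generates_mul S A k x : generates S A -> x \in S -> k * x \in S.
Proof.
move=> genA xS; elim: k => [|k IH]; first by apply/genA; apply: in_gen0.
by rewrite mulSn (generates_add genA).
Qed.

End Generation.

Section MinimalGenerators.

Variable S : pred nat.
Implicit Types (A B : seq nat) (a m x y : nat).

Lemma is_msgP A : is_msg S A <->
  [/\ uniq A, generates S A & forall a, a \in A -> ~ in_gen [seq y <- A | y != a] a].
Proof.
split=> [[uA genA minA]|[uA genA indepA]]; split=> //.
- move=> a aA gen_a.
  have sub : {subset [seq y <- A | y != a] <= A} by move=> y; rewrite mem_filter => /andP[].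
  have : generates S [seq y <- A | y != a].
    move=> x; rewrite genA; split; last exact: in_gen_sub.
    apply: in_gen_trans => b bA; have [-> //|ba] := eqVneq b a.
    by apply: in_gen_mem; rewrite mem_filter ba.
  by move/(minA _ sub)/(_ a aA); rewrite mem_filter eqxx.
- move=> B sBA genB a aA; apply/idPn => aNB; apply: (indepA a aA).
  have aS : a \in S by apply/genA/in_gen_mem.
  apply: in_gen_sub ((genB a).1 aS) => b bB.
  by rewrite mem_filter sBA // andbT; apply: contraNneq aNB => <-.
Qed.

Lemma is_msg_perm A B : perm_eq A B -> is_msg S A -> is_msg S B.
Proof.
move=> AB /is_msgP[uA genA indepA]; apply/is_msgP; split.
- by rewrite -(perm_uniq AB).
- by move=> x; rewrite genA; split; apply: in_gen_sub => y; rewrite (perm_mem AB).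
- move=> a; rewrite -(perm_mem AB) => /indepA; apply: contra_not; apply: in_gen_sub => y.
  by rewrite !mem_filter (perm_mem AB).
Qed.

Lemma msg_gt0 A a : is_msg S A -> a \in A -> 0 < a.
Proof.
case/is_msgP=> _ _ indepA aA; rewrite lt0n; apply/eqP => a0.
by apply: (indepA a aA); rewrite a0; apply: in_gen0.
Qed.

Lemma msg_indecomposable A a x y : is_msg S A -> a \in A -> x \in S -> y \in S ->
  x + y = a -> x = 0 \/ y = 0.
Proof.
case/is_msgP=> _ genA indepA aA xS yS xya.
have [|x0] := posnP x; first by left.
have [|y0] := posnP y; first by right.
case: (indepA a aA); rewrite -xya.
apply: in_gen_add; apply: in_gen_filter_lt; try exact/genA.
  by rewrite -{1}[x]addn0 ltn_add2l.
by rewrite -{1}[y]add0n ltn_add2r.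
Qed.

Lemma multiplicity_in_msg A m : is_msg S A -> is_multiplicity S m -> m \in A.
Proof.
move=> msgA [m0 mS mmin]; have /is_msgP[_ genA _] := msgA.
have [c [y [cA Ay em]]] := in_gen_gt0 ((genA m).1 mS) m0.
have : m <= c by apply: mmin; [apply/genA/in_gen_mem | apply: msg_gt0 msgA cA].
by rewrite em -{2}[c]addn0 leq_add2l leqn0 => /eqP->; rewrite addn0.
Qed.

End MinimalGenerators.

Section Apery.

Variable S : pred nat.
Implicit Types (i j m w : nat).

Lemma apery_uniq m i w1 w2 : is_apery_elt S m i w1 -> is_apery_elt S m i w2 -> w1 = w2.
Proof. by case=> S1 e1 min1 [S2 e2 min2]; apply/eqP; rewrite eqn_leq min1 // min2. Qed.

Lemma apery_mod m i j w : i = j %[mod m] -> is_apery_elt S m i w -> is_apery_elt S m j w.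
Proof. by move=> eij [wS wi wmin]; split=> // [|s sS]; rewrite -eij // => /wmin->. Qed.

Lemma apery_exists m i : numerical_semigroup S -> 0 < m -> exists w, is_apery_elt S m i w.
Proof.
case=> _ _ [N SN] m0.
have ex : exists s, (s \in S) && (s %% m == i %% m).
  exists (N * m + i %% m); rewrite modnMDl modn_mod eqxx andbT SN //.
  by rewrite (leq_trans _ (leq_addr _ _)) // leq_pmulr.
case: (ex_minnP ex) => w /andP[wS /eqP wi] wmin.
by exists w; split=> // s sS si; apply: wmin; rewrite sS si eqxx.
Qed.

Lemma msg_apery A m a : is_msg S A -> m \in S -> a \in A -> a != m -> is_apery_elt S m a a.
Proof.
move=> msgA mS aA am; have /is_msgP[_ genA _] := msgA.
split=> //; first by apply/genA/in_gen_mem.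
move=> s sS sa; rewrite leqNgt; apply/negP => lt_sa.
have /dvdnP[[|k] ek] : m %| a - s by rewrite -eqn_mod_dvd ?(ltnW lt_sa) // sa.
  by move/eqP: ek; rewrite mul0n subn_eq0 leqNgt lt_sa.
have sk_m : (s + k * m) + m = a.
  by rewrite -addnA [k * m + m]addnC -mulSn -ek subnKC // ltnW.
have sk_S : s + k * m \in S by rewrite (generates_add genA) // (generates_mul _ genA).
case: (msg_indecomposable msgA aA sk_S mS sk_m) => [sk0|m0].
  by move: am; rewrite -sk_m sk0 add0n eqxx.
by move/eqP: ek; rewrite m0 muln0 subn_eq0 leqNgt lt_sa.
Qed.

Lemma msg_mod_neq0 A m a : is_msg S A -> m \in S -> a \in A -> a != m -> a %% m != 0.
Proof.
move=> msgA mS aA am; apply: contraTneq (msg_gt0 msgA aA) => a0.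
have [_ _ amin] := msg_apery msgA mS aA am.
have S0 : 0 \in S by case/is_msgP: msgA => _ /(_ 0) -> _; apply: in_gen0.
by rewrite -leqNgt amin // mod0n a0.
Qed.

End Apery.

Lemma modn_lincomb m n1 n2 z u v :
  (z * m + u * n1 + v * n2) %% m = (u * (n1 %% m) + v * (n2 %% m)) %% m.
Proof. by rewrite -addnA modnMDl -modnDm -[RHS]modnDm !modnMmr. Qed.

Definition apery_increasing (S : pred nat) (m : nat) : Prop :=
  forall i j wi wj, 1 <= i -> i < j -> j <= m - 1 ->
    is_apery_elt S m i wi -> is_apery_elt S m j wj -> wi < wj.

Lemma apery_increasing_leq S m i j wi wj : apery_increasing S m ->
  0 < i < m -> 0 < j < m -> is_apery_elt S m i wi -> is_apery_elt S m j wj ->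
  wi <= wj -> i <= j.
Proof.
move=> incr /andP[i0 im] /andP[j0 jm] api apj wij; rewrite leqNgt; apply/negP => ji.
have : wj < wi by apply: incr apj api => //; lia.
by rewrite ltnNge wij.
Qed.

Definition mans_triple (m n1 n2 t : nat) : Prop :=
  [/\ m < n1, n1 %% m = 1, n2 %% m = t, 2 <= t < m & (t - 1) * n1 < n2 < t * n1].

Section MANSGenerators.

Variables (S : pred nat) (m : nat).
Hypotheses (NS : numerical_semigroup S) (mult : is_multiplicity S m).
Hypothesis incr : apery_increasing S m.

Lemma msg_multiplicity_gt1 A a : is_msg S A -> a \in A -> a != m -> 1 < m.
Proof.
move=> msgA aA am; have [m0 mS _] := mult.
rewrite ltn_neqAle m0 andbT; apply: contraNneq (msg_mod_neq0 msgA mS aA am) => <-.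
by rewrite modn1.
Qed.

Lemma msg_le_apery1 A e w1 : is_msg S A -> e \in A -> e != m ->
  is_apery_elt S m 1 w1 -> e <= w1 -> e %% m = 1.
Proof.
move=> msgA eA em apw1 e_w1; have [m0 mS _] := mult.
have r0 := msg_mod_neq0 msgA mS eA em.
have ape : is_apery_elt S m (e %% m) e.
  by apply: apery_mod (msg_apery msgA mS eA em); rewrite modn_mod.
apply/eqP; rewrite eqn_leq lt0n r0 andbT.
apply: apery_increasing_leq incr _ _ ape apw1 e_w1; rewrite ?lt0n ?r0 ?ltn_pmod //.
exact: msg_multiplicity_gt1 msgA eA em.
Qed.

Lemma msg_residue1 c d : is_msg S [:: m; c; d] -> c %% m = 1 \/ d %% m = 1.
Proof.
move=> msg; have [m0 mS _] := mult; have /is_msgP[uA genA _] := msg.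
have [cm dm] : c != m /\ d != m.
  by move: uA; rewrite /= !inE negb_or ![m == _]eq_sym => /andP[/andP[-> ->]].
have m1 : 1 < m by apply: msg_multiplicity_gt1 msg _ cm; rewrite !inE eqxx orbT.
have [w1 apw1] := apery_exists 1 NS m0; have [w1S w1m w1min] := apw1.
have w1_0 : 0 < w1.
  by rewrite lt0n; apply/eqP => w1_0; move: w1m; rewrite w1_0 mod0n modn_small.
have [e [y [eA Ay ew]]] := in_gen_gt0 ((genA w1).1 w1S) w1_0.
have e_w1 : e <= w1 by rewrite ew leq_addr.
move: eA; rewrite !inE => /or3P[]/eqP ee.
- have : w1 <= y by apply: w1min; [apply/genA | rewrite -w1m ew ee modnDl].
  by rewrite ew ee -{2}[y]add0n leq_add2r leqNgt m0.
- by left; apply: msg_le_apery1 msg _ cm apw1 _; rewrite -ee ?inE ?eqxx ?orbT.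
- by right; apply: msg_le_apery1 msg _ dm apw1 _; rewrite -ee ?inE ?eqxx ?orbT.
Qed.

Variables n1 n2 : nat.
Hypotheses (msg : is_msg S [:: m; n1; n2]) (n1m : n1 %% m = 1).

Local Notation t := (n2 %% m).

Let gen : generates S [:: m; n1; n2]. Proof. by case/is_msgP: msg. Qed.
Let mS : m \in S. Proof. by case: mult. Qed.
Let m_gt0 : 0 < m. Proof. by case: mult. Qed.
Let n1A : n1 \in [:: m; n1; n2]. Proof. by rewrite !inE eqxx orbT. Qed.
Let n2A : n2 \in [:: m; n1; n2]. Proof. by rewrite !inE eqxx !orbT. Qed.
Let n1S : n1 \in S. Proof. exact/gen/in_gen_mem. Qed.

Let generators_neq : [/\ n1 != m, n2 != m & n1 != n2].
Proof.
case/is_msgP: msg => /= + _ _.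
by rewrite !inE negb_or ![m == _]eq_sym andbT => /andP[/andP[-> ->] ->].
Qed.

Lemma msg_residue_gt1 : 1 < t.
Proof.
have [n1m' n2m' n12] := generators_neq.
rewrite ltn_neqAle lt0n (msg_mod_neq0 msg mS n2A n2m') andbT.
apply: contraNneq n12 => t_1; apply/eqP/(apery_uniq (msg_apery msg mS n1A n1m')).
by apply: apery_mod (msg_apery msg mS n2A n2m'); rewrite n1m -t_1.
Qed.

Lemma msg_lower_bound : (t - 1) * n1 < n2.
Proof.
have t1 := msg_residue_gt1; have tm : t < m := ltn_pmod n2 m_gt0.
have [_ n2m' _] := generators_neq.
have [w apw] := apery_exists (t - 1) NS m_gt0; have [wS wm _] := apw.
have apn2 : is_apery_elt S m t n2.
  by apply: apery_mod (msg_apery msg mS n2A n2m'); rewrite modn_mod.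
have w_n2 : w < n2 by apply: (@incr (t - 1) t w n2) => //; lia.
have /in_gen3P[z [u [[|v] ew]]] := (gen w).1 wS; last first.
  by move: w_n2; rewrite ew mulSn; lia.
have ut : t - 1 <= u.
  move: wm; rewrite ew modn_lincomb n1m muln1 mul0n addn0 (@modn_small (t - 1)) => [<-|].
    exact: leq_mod.
  by apply: leq_ltn_trans tm; rewrite leq_subr.
apply: leq_ltn_trans w_n2; rewrite ew mul0n addn0 (leq_trans _ (leq_addl _ _)) //.
by rewrite leq_mul2r ut orbT.
Qed.

Lemma msg_upper_bound : n2 < t * n1.
Proof.
have t1 := msg_residue_gt1; have [_ n2m' _] := generators_neq.
have [_ _ n2min] := msg_apery msg mS n2A n2m'.
have : n2 <= t * n1.
  by apply: n2min; [apply: generates_mul gen n1S | rewrite -modnMmr n1m muln1 modn_mod].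
rewrite leq_eqVlt => /predU1P[e|//]; exfalso.
have split_n2 : n1 + (t - 1) * n1 = n2 by rewrite [RHS]e -mulSn subn1 prednK // ltnW.
have n1_gt0 := msg_gt0 msg n1A.
have [n1_0|/eqP] := msg_indecomposable msg n2A n1S (generates_mul _ gen n1S) split_n2.
  by rewrite n1_0 in n1_gt0.
by rewrite muln_eq0 subn_eq0 leqNgt t1 eqn0Ngt n1_gt0.
Qed.

Lemma MANS_msg_triple : mans_triple m n1 n2 t.
Proof.
have [_ _ mmin] := mult; have [n1m' _ _] := generators_neq.
have m_n1 : m < n1 by rewrite ltn_neqAle eq_sym n1m' mmin ?(msg_gt0 msg n1A).
by split; rewrite ?msg_residue_gt1 ?ltn_pmod ?msg_lower_bound ?msg_upper_bound.
Qed.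

End MANSGenerators.

Lemma MANS_e3_triple S : numerical_semigroup S -> MANS S -> embedding_dimension_is S 3 ->
  exists m n1 n2 t, mans_triple m n1 n2 t /\ generates S [:: m; n1; n2].
Proof.
move=> NS [m [mult incr]] [A [msgA sizeA]].
have mA := multiplicity_in_msg msgA mult.
have [c [d msg_mcd]] : exists c d, is_msg S [:: m; c; d].
  move: (is_msg_perm (perm_to_rem mA) msgA) (size_rem mA); rewrite sizeA.
  by case: (rem m A) => [|c [|d []]] // msg _; exists c, d.
wlog cm : c d msg_mcd / c %% m = 1.
  move=> wlog; have [|dm] := msg_residue1 NS mult incr msg_mcd; first exact: wlog msg_mcd.
  apply: (wlog d c) dm; apply: is_msg_perm msg_mcd.
  by rewrite perm_cons (perm_catC [:: c] [:: d]).
exists m, c, d, (d %% m); split; last by case/is_msgP: msg_mcd.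
exact: (MANS_msg_triple NS mult incr msg_mcd cm).
Qed.

Definition triple_apery (n1 n2 t N : nat) : nat := N %/ t * n2 + N %% t * n1.

Section TripleMANS.

Variables (S : pred nat) (m n1 n2 t : nat).
Hypotheses (triple : mans_triple m n1 n2 t) (gen : generates S [:: m; n1; n2]).

Local Notation w := (triple_apery n1 n2 t).

Let t_gt0 : 0 < t. Proof. by case: triple => _ _ _ /andP[/ltnW]. Qed.

Let n1_gt0 : 0 < n1. Proof. by case: triple => /(leq_ltn_trans (leq0n m)). Qed.

Let n1_lt_n2 : n1 < n2.
Proof.
case: triple => _ _ _ /andP[t2 _] /andP[lo _]; apply: leq_ltn_trans lo.
by rewrite leq_pmull // subn_gt0.
Qed.

Lemma triple_apery_qr q r : r < t -> w (q * t + r) = q * n2 + r * n1.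
Proof. by move=> rt; rewrite /triple_apery divnMDl // modnMDl divn_small // modn_small // addn0. Qed.

Lemma triple_apery_ltS N : w N < w N.+1.
Proof.
have [_ _ _ _ /andP[lo _]] := triple.
move: (divn_eq N t) (ltn_pmod N t_gt0); move: (N %/ t) (N %% t) => q r -> rt.
rewrite triple_apery_qr // -[(q * t + r).+1]addnS.
have [r_last|r_lt] := eqVneq r.+1 t.
  rewrite r_last -[q * t + t]addn0 -mulSnr triple_apery_qr //.
  by move: lo; rewrite -r_last subn1 /= mulSnr; lia.
rewrite triple_apery_qr ?mulSnr; last by rewrite ltn_neqAle r_lt.
by rewrite addnA -[X in X < _]addn0 ltn_add2l.
Qed.

Lemma triple_apery_mono : {homo w : x y / x < y}.
Proof. exact: homo_ltn ltn_trans triple_apery_ltS. Qed.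

Lemma triple_apery_leq x y : x <= y -> w x <= w y.
Proof. by rewrite leq_eqVlt => /predU1P[-> //|/triple_apery_mono/ltnW]. Qed.

Lemma triple_apery_le_lincomb u v : w (u + v * t) <= u * n1 + v * n2.
Proof.
have [_ _ _ _ /andP[_ hi]] := triple.
move: (divn_eq u t) (ltn_pmod u t_gt0); move: (u %/ t) (u %% t) => q r -> rt.
rewrite addnAC -mulnDl triple_apery_qr //.
have : q * n2 <= q * t * n1 by rewrite -mulnA leq_mul2l ltnW ?orbT.
lia.
Qed.

Lemma triple_apery_in N : w N \in S.
Proof. by apply/gen/in_gen3P; exists 0, (N %% t), (N %/ t); rewrite mul0n addnC. Qed.

Lemma triple_apery_mod N : w N = N %[mod m].
Proof.
have [_ n1m n2m _ _] := triple.
rewrite /triple_apery addnC.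
have := modn_lincomb m n1 n2 0 (N %% t) (N %/ t).
by rewrite mul0n add0n n1m n2m muln1 => ->; rewrite addnC -divn_eq.
Qed.

Lemma triple_apery_elt i : i < m -> is_apery_elt S m i (w i).
Proof.
have [_ n1m n2m _ _] := triple.
move=> im; split; [exact: triple_apery_in | exact: triple_apery_mod |].
move=> s /gen/in_gen3P[z [u [v ->]]] si.
have : i <= u + v * t.
  by move: si; rewrite modn_lincomb n1m n2m muln1 (modn_small im) => <-; apply: leq_mod.
move/triple_apery_leq/leq_trans; apply; apply: leq_trans (triple_apery_le_lincomb u v) _.
by rewrite -addnA leq_addl.
Qed.

Lemma triple_multiplicity : is_multiplicity S m.
Proof.
have [mn1 _ _ /andP[_ tm] _] := triple; have n12 := n1_lt_n2.
split; first exact: leq_ltn_trans tm.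
  by apply/gen/in_gen_mem; rewrite mem_head.
by move=> s /gen/in_gen3P[[|z] [[|u] [[|v] ->]]]; rewrite ?mulSn; lia.
Qed.

Lemma triple_msg : is_msg S [:: m; n1; n2].
Proof.
have [mn1 n1m n2m /andP[_ tm] /andP[_ hi]] := triple; have n12 := n1_lt_n2.
have mn2 := ltn_trans mn1 n12.
apply/is_msgP; split=> //.
  by rewrite /= !inE !negb_or !neq_ltn mn1 n12 mn2 ?orbT.
move=> a; rewrite !inE => /or3P[]/eqP->; rewrite /= eqxx.
all: rewrite ?(gtn_eqF mn1, ltn_eqF mn1, gtn_eqF n12, ltn_eqF n12, gtn_eqF mn2, ltn_eqF mn2) /=.
all: move/in_gen2P => [k [l e]].
- by case: k l e => [|k] [|l]; rewrite ?mulSn; lia.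
- case: l e => [|l] e; last by move: e; rewrite mulSn; lia.
  by move: n1m; rewrite e mul0n addn0 modnMl.
- have lt : l %% m = t by rewrite -n2m e modnMDl -modnMmr n1m muln1.
  have : t * n1 <= l * n1 by rewrite leq_mul2r -{1}lt leq_mod orbT.
  by move: hi; rewrite e; lia.
Qed.

Lemma triple_MANS_e3 : MANS S /\ embedding_dimension_is S 3.
Proof.
split; last by exists [:: m; n1; n2]; split; first exact: triple_msg.
exists m; split; first exact: triple_multiplicity.
move=> i j wi wj i1 ij jm api apj; have [m0 _ _] := triple_multiplicity.
have jm' : j < m by move: jm; rewrite leq_subRL ?add1n.
rewrite (apery_uniq api (triple_apery_elt (ltn_trans ij jm'))).
by rewrite (apery_uniq apj (triple_apery_elt jm')) triple_apery_mono.
Qed.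

End TripleMANS.

Theorem theorem3p7 (S : pred nat) :
  numerical_semigroup S ->
  (MANS S /\ embedding_dimension_is S 3) <->
  (exists m a b t : nat,
     [/\ 3 <= m, 1 <= a, 2 <= t <= m - 1,
         (t - 1) * (a * m + 1) < b * m + t < t * (a * m + 1)
       & generates S [:: m; a * m + 1; b * m + t]]).
Proof.
move=> NS; split=> [[mans e3]|[m [a [b [t [m3 a1 /andP[t2 tm] bounds gen]]]]]].
- have [m [n1 [n2 [t [[mn1 n1m n2m /andP[t2 tm] bounds] gen]]]]] := MANS_e3_triple NS mans e3.
  have n1E : n1 %/ m * m + 1 = n1 by rewrite {2}(divn_eq n1 m) n1m.
  have n2E : n2 %/ m * m + t = n2 by rewrite {2}(divn_eq n2 m) n2m.
  exists m, (n1 %/ m), (n2 %/ m), t; rewrite n1E n2E; split=> //; last lia.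
  + exact: leq_ltn_trans t2 tm.
  + by rewrite divn_gt0; [apply: ltnW | apply: leq_ltn_trans tm].
- have tm' : t < m by lia.
  apply: (triple_MANS_e3 (t := t) _ gen); split=> //; last by rewrite t2.
  + by rewrite addn1 ltnS leq_pmull.
  + by rewrite modnMDl modn_small // (leq_trans _ m3).
  + by rewrite modnMDl modn_small.
Qed.
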